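(* Let $M$ be a generic structure for the class $\mathcal{C}$ (as described in the context), and let $\bar a,\bar b$ be tuples of $M$ enumerating strong substructures of the same type over $\emptyset$. If $tp(\bar a/N)=tp(\bar b/N)$ for some elementary substructure $N\preceq M$, then for every pair of subtuples $\bar a'\subseteq\bar a$, $\bar b'\subseteq\bar b$ of length $l$ occupying the same places in $\bar a$ and $\bar b$, $$(\bar a'\le_l\bar b'<_l f(\bar a'))\vee(\bar b'\le_l\bar a'<_l f(\bar b')).$$
   Context: Let $L=\{E_n,K_n,R_n : 2<n<\omega\}$ be a relational language, where $E_n$ and $R_n$ have arity $2n$ and $K_n$ has arity $3n$. All these relations hold only on tuples whose $n$-blocks consist of $n$ distinct elements, and their truth depends only on the underlying $n$-element sets of the blocks. Let $K$ be the class of finite $L$-structures $C$ such that for each $n$: (1) $E_n$ is an equivalence relation on the set ${C\choose n}$ of $n$-element subsets of $C$; (2) $R_n$ is irreflexive, respects $E_n$, and induces a partial injective function on ${C\choose n}/E_n$; (3) $K_n$ respects $E_n$ in each argument and induces a circular order on ${C\choose n}/E_n$; (4) $R_n(\bar x,\bar y)\wedge R_n(\bar y,\bar z)\to K_n(\bar x,\bar y,\bar z)$, and if $R_n(\bar v_i,\bar w_i)$ for $i=1,2,3$ then $K_n(\bar v_1,\bar v_2,\bar v_3)\leftrightarrow K_n(\bar w_1,\bar w_2,\bar w_3)$; (5) the partial function induced by $R_n$ extends to an injective function $f$ on some larger domain such that $f^n$ is the identity on its domain but $f^m(V)\ne V$ for every $V\in{C\choose n}/E_n$ and $0<m<n$.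 A structure $A\in K$ is strong if for every $n$, either all elements of ${A\choose n}$ are pairwise $E_n$-equivalent, or every $\bar a\in{A\choose n}$ lies in an $R_n$-cycle: a sequence $\bar a_1=\bar a,\dots,\bar a_n$ of pairwise non-$E_n$-equivalent elements of ${A\choose n}$ with $R_n(\bar a_i,\bar a_{i+1})$ for $i<n$ and $R_n(\bar a_n,\bar a_1)$. Let $\mathcal{C}$ be the class of strong structures in $K$. A countable $L$-structure $M$ is generic for $\mathcal{C}$ if: $\mathcal{C}$ is exactly the class of finite substructures of $M$ that belong to $\mathcal{C}$ (strong substructures); $M$ is the union of a chain of strong finite substructures; and whenever $A\subseteq M$ is a strong finite substructure and $A\subseteq B\in\mathcal{C}$, $B$ embeds into $M$ over $A$. Such $M$ exists, is $\aleph_0$-categorical, and every isomorphism between strong finite substructures of $M$ extends to an automorphism. Notation: $\bar a<_n\bar b<_n\bar c$ means $K_n(\bar a,\bar b,\bar c)$; $\le_n$ is its version allowing equality of $E_n$-classes; $f(\bar c)$ denotes some (any) $\bar c'$ with $R_n(\bar c,\bar c')$, where $n$ is the length of $\bar c$. *)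

From mathcomp Require Import all_boot.

Set Implicit Arguments.
Unset Strict Implicit.
Unset Printing Implicit Defensive.

(* E_n, R_n (arity 2n) are given as relations on pairs of
   n-blocks, K_n (arity 3n) on triples of n-blocks; an n-block is a map
   'I_n -> carrier.  The language only has symbols for 2 < n; the fields
   at n <= 2 are junk and are never used (all conditions quantify over
   2 < n, and formulas only use indices n.+3). *)
Record Lstr := {
  car :> Type;
  Erel : forall n, ('I_n -> car) -> ('I_n -> car) -> Prop;
  Rrel : forall n, ('I_n -> car) -> ('I_n -> car) -> Prop;
  Krel : forall n, ('I_n -> car) -> ('I_n -> car) -> ('I_n -> car) -> Prop
}.

Arguments Erel {_} n _ _.
Arguments Rrel {_} n _ _.
Arguments Krel {_} n _ _ _.

Definition sameset (T : Type) n (x y : 'I_n -> T) : Prop :=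
  forall z, (exists i, x i = z) <-> (exists i, y i = z).

(* Language convention: relations hold only on blocks of distinct elements,
   and their truth depends only on the underlying sets of the blocks. *)
Definition lang_ok (A : Lstr) : Prop :=
  forall n, 2 < n ->
  [/\ (forall x y : 'I_n -> A, Erel n x y -> injective x /\ injective y),
      (forall x y : 'I_n -> A, Rrel n x y -> injective x /\ injective y),
      (forall x y z : 'I_n -> A, Krel n x y z -> [/\ injective x, injective y & injective z]),
      (forall x x' y y' : 'I_n -> A, injective x -> injective x' -> injective y -> injective y' ->
          sameset x x' -> sameset y y' ->
          (Erel n x y <-> Erel n x' y') /\ (Rrel n x y <-> Rrel n x' y'))
    & (forall x x' y y' z z' : 'I_n -> A, injective x -> injective x' -> injective y ->
          injective y' -> injective z -> injective z' ->
          sameset x x' -> sameset y y' -> sameset z z' ->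
          (Krel n x y z <-> Krel n x' y' z'))].

Definition K_cond (A : Lstr) (n : nat) : Prop :=
  (forall x : 'I_n -> A, injective x -> Erel n x x) /\
      (forall x y : 'I_n -> A, Erel n x y -> Erel n y x) /\
      (forall x y z : 'I_n -> A, Erel n x y -> Erel n y z -> Erel n x z) /\
      (forall x : 'I_n -> A, ~ Rrel n x x) /\
      (forall x x' y y' : 'I_n -> A, Erel n x x' -> Erel n y y' -> Rrel n x y -> Rrel n x' y') /\
      (forall x y y' : 'I_n -> A, Rrel n x y -> Rrel n x y' -> Erel n y y') /\
      (forall x x' y : 'I_n -> A, Rrel n x y -> Rrel n x' y -> Erel n x x') /\
      (forall x x' y z : 'I_n -> A, Erel n x x' -> Krel n x y z -> Krel n x' y z) /\
      (forall x y y' z : 'I_n -> A, Erel n y y' -> Krel n x y z -> Krel n x y' z) /\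
      (forall x y z z' : 'I_n -> A, Erel n z z' -> Krel n x y z -> Krel n x y z') /\
   (forall x y z : 'I_n -> A, Krel n x y z -> Krel n y z x) /\
       (forall x y z : 'I_n -> A, Krel n x y z -> ~ Krel n z y x) /\
       (forall x y z w : 'I_n -> A, Krel n x y z -> Krel n x z w -> Krel n x y w) /\
       (forall x y z : 'I_n -> A, injective x -> injective y -> injective z ->
          ~ Erel n x y -> ~ Erel n y z -> ~ Erel n x z ->
          (Krel n x y z \/ Krel n z y x)) /\
       (forall x y z : 'I_n -> A, Rrel n x y -> Rrel n y z -> Krel n x y z) /\
       (forall v1 v2 v3 w1 w2 w3 : 'I_n -> A,
          Rrel n v1 w1 -> Rrel n v2 w2 -> Rrel n v3 w3 ->
          (Krel n v1 v2 v3 <-> Krel n w1 w2 w3)) /\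
  (* (5) R_n's induced partial function on classes extends to an injective f
         on a larger domain D (classes embedded into D via iota), f^n = id on D,
         and f^m(V) <> V for every class V of A and 0 < m < n. *)
       exists (D : Type) (iota : ('I_n -> A) -> D) (f : D -> D),
         [/\ (forall x y : 'I_n -> A, injective x -> injective y -> (iota x = iota y <-> Erel n x y)),
             injective f,
             (forall d, iter n f d = d),
             (forall x y : 'I_n -> A, Rrel n x y -> f (iota x) = iota y) &
             (forall x : 'I_n -> A, injective x -> forall m, 0 < m < n -> iter m f (iota x) <> iota x)].

Definition finite_str (A : Lstr) : Prop :=
  exists m (g : 'I_m -> A), forall x, exists i, g i = x.

Definition in_K (A : Lstr) : Prop :=
  finite_str A /\ lang_ok A /\ forall n, 2 < n -> K_cond A n.

Definition in_Rcycle (A : Lstr) n (x : 'I_n -> A) : Prop :=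
  exists c : nat -> ('I_n -> A),
    [/\ c 0 = x,
        (forall i j, i < n -> j < n -> i <> j -> ~ Erel n (c i) (c j)),
        (forall i, i.+1 < n -> Rrel n (c i) (c i.+1)) &
        Rrel n (c n.-1) (c 0)].

Definition strong (A : Lstr) : Prop :=
  in_K A /\
  forall n, 2 < n ->
    (forall x y : 'I_n -> A, injective x -> injective y -> Erel n x y) \/
    (forall x : 'I_n -> A, injective x -> in_Rcycle x).

Definition in_C (A : Lstr) : Prop := strong A.

Definition sub (M : Lstr) (P : M -> Prop) : Lstr := {|
  car := {x : M | P x};
  Erel n x y := Erel n (fun i => proj1_sig (x i)) (fun i => proj1_sig (y i));
  Rrel n x y := Rrel n (fun i => proj1_sig (x i)) (fun i => proj1_sig (y i));
  Krel n x y z := Krel n (fun i => proj1_sig (x i)) (fun i => proj1_sig (y i))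
                         (fun i => proj1_sig (z i)) |}.

Definition embedding (A B : Lstr) (h : A -> B) : Prop :=
  injective h /\
  forall n, 2 < n ->
    [/\ forall x y : 'I_n -> A, Erel n x y <-> Erel n (h \o x) (h \o y),
        forall x y : 'I_n -> A, Rrel n x y <-> Rrel n (h \o x) (h \o y) &
        forall x y z : 'I_n -> A, Krel n x y z <-> Krel n (h \o x) (h \o y) (h \o z)].

Definition generic (M : Lstr) : Prop :=
  (forall B : Lstr, in_C B -> exists h : B -> M, embedding h) /\
  (exists Ach : nat -> M -> Prop,
     [/\ forall k, in_C (@sub M (Ach k)),
         forall k x, Ach k x -> Ach k.+1 x &
         forall x, exists k, Ach k x]) /\
  (forall (P : M -> Prop), in_C (sub P) ->
     forall (B : Lstr) (g : sub P -> B), in_C B -> embedding g ->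
       exists h : B -> M, embedding h /\ forall x, h (g x) = proj1_sig x).

Inductive form : Type :=
| FEq : nat -> nat -> form
| FE : forall n, ('I_n.+3 -> nat) -> ('I_n.+3 -> nat) -> form
| FR : forall n, ('I_n.+3 -> nat) -> ('I_n.+3 -> nat) -> form
| FK : forall n, ('I_n.+3 -> nat) -> ('I_n.+3 -> nat) -> ('I_n.+3 -> nat) -> form
| FNot : form -> form
| FAnd : form -> form -> form
| FEx : nat -> form -> form.

Definition upd (T : Type) (rho : nat -> T) (v : nat) (x : T) : nat -> T :=
  fun i => if i == v then x else rho i.

Fixpoint sat (M : Lstr) (D : M -> Prop) (rho : nat -> M) (phi : form) : Prop :=
  match phi with
  | FEq i j => rho i = rho j
  | FE n x y => Erel n.+3 (rho \o x) (rho \o y)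
  | FR n x y => Rrel n.+3 (rho \o x) (rho \o y)
  | FK n x y z => Krel n.+3 (rho \o x) (rho \o y) (rho \o z)
  | FNot p => ~ sat D rho p
  | FAnd p q => sat D rho p /\ sat D rho q
  | FEx v p => exists x, D x /\ sat D (upd rho v x) p
  end.

Fixpoint free_in (v : nat) (phi : form) : Prop :=
  match phi with
  | FEq i j => v = i \/ v = j
  | FE n x y => exists i, v = x i \/ v = y i
  | FR n x y => exists i, v = x i \/ v = y i
  | FK n x y z => exists i, [\/ v = x i, v = y i | v = z i]
  | FNot p => free_in v p
  | FAnd p q => free_in v p \/ free_in v q
  | FEx w p => v <> w /\ free_in v p
  end.

(* the environment interpreting variables 0..k-1 by the tuple a, and
   variables k+j by rho j *)
Definition ext (T : Type) k (a : 'I_k -> T) (rho : nat -> T) : nat -> T :=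
  fun i => oapp a (rho (i - k)) (insub i : option 'I_k).

Definition msat (M : Lstr) (rho : nat -> M) (phi : form) : Prop :=
  sat (fun _ => True) rho phi.

Definition elem_sub (M : Lstr) (N : M -> Prop) : Prop :=
  (exists x, N x) /\
  forall (phi : form) (rho : nat -> M), (forall i, N (rho i)) ->
    (sat N rho phi <-> msat rho phi).

Definition same_type0 (M : Lstr) k (a b : 'I_k -> M) : Prop :=
  forall phi : form, (forall v, free_in v phi -> v < k) ->
    forall rho : nat -> M, msat (ext a rho) phi <-> msat (ext b rho) phi.

(* tp(a/N) = tp(b/N) : variables >= k are parameters taken from N *)
Definition same_type_over (M : Lstr) (N : M -> Prop) k (a b : 'I_k -> M) : Prop :=
  forall (phi : form) (rho : nat -> M), (forall i, N (rho i)) ->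
    (msat (ext a rho) phi <-> msat (ext b rho) phi).

(* x <=_n y <_n z : either K_n(x,y,z), or x E_n y and y, z lie in different classes *)
Definition le_lt (M : Lstr) n (x y z : 'I_n -> M) : Prop :=
  Krel n x y z \/ (Erel n x y /\ ~ Erel n y z).

Definition range_of (M : Lstr) k (a : 'I_k -> M) : M -> Prop :=
  fun x => exists i, a i = x.

From mathcomp Require Import all_boot.
From Stdlib Require Import Classical FunctionalExtensionality.

Set Implicit Arguments.
Unset Strict Implicit.
Unset Printing Implicit Defensive.

(* Since M is the union of a chain of strong finite substructures, the R_l-edge
   from a' lies in one of them, hence on an R_l-cycle of length l; by
   elementarity N contains such a cycle g_0, ..., g_(l-1).  As a' and b' have
   the same type over N, they are E_l-equivalent to the same g_j and lie in
   the same arc between consecutive points of the cycle.  If (g_p, g_q) is an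
   arc containing no g_j, f maps it onto the arc (g_(p+1), g_(q+1)), which has
   another starting point; so f(x) lies outside (g_p, g_q) for x inside it,
   and whenever x precedes y in the arc we get x < y < f(x). *)

Lemma exists_minimal (T : Type) (r : T -> T -> Prop) (g : nat -> T) m :
  (forall x, ~ r x x) -> (forall x y z, r x y -> r y z -> r x z) -> 0 < m ->
  exists2 q, q < m & forall j, j < m -> ~ r (g j) (g q).
Proof.
move=> irr tr; case: m => // m _; elim: m => [|m [q lt_q_m IH]].
  by exists 0 => // j; rewrite ltnS leqn0 => /eqP ->.
case: (classic (r (g m.+1) (g q))) => Hm.
- exists m.+1 => // j; rewrite ltnS leq_eqVlt => /orP [/eqP -> // | lt_j_m] Hj.
  exact: IH lt_j_m (tr _ _ _ Hj Hm).
- exists q; first exact: ltnW.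
  by move=> j; rewrite ltnS leq_eqVlt => /orP [/eqP -> // | /IH].
Qed.

Section CircularOrder.

Variables (A : Lstr) (n : nat).
Hypotheses (HK : K_cond A n) (HL : lang_ok A) (Hn : 2 < n).

Ltac K_axioms := case: HK => Erf [Esy [Etr [Rir [Rre [_ [Rin [_ [K2 [K3
  [Kcy [Kas [Ktr [Kto [_ [K4b _]]]]]]]]]]]]]]].

Lemma Erel_refl {x : 'I_n -> A} : injective x -> Erel n x x.
Proof. by K_axioms; apply: Erf. Qed.

Lemma Erel_sym (x y : 'I_n -> A) : Erel n x y -> Erel n y x.
Proof. by K_axioms; apply: Esy. Qed.

Lemma Erel_trans (x y z : 'I_n -> A) : Erel n x y -> Erel n y z -> Erel n x z.
Proof. by K_axioms; apply: Etr. Qed.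

Lemma Rrel_irr (x : 'I_n -> A) : ~ Rrel n x x.
Proof. by K_axioms; apply: Rir. Qed.

Lemma Rrel_resp (x x' y y' : 'I_n -> A) :
  Erel n x x' -> Erel n y y' -> Rrel n x y -> Rrel n x' y'.
Proof. by K_axioms; apply: Rre. Qed.

Lemma Rrel_injl (x x' y : 'I_n -> A) : Rrel n x y -> Rrel n x' y -> Erel n x x'.
Proof. by K_axioms; apply: Rin. Qed.

Lemma Krel_resp2 (x y y' z : 'I_n -> A) : Erel n y y' -> Krel n x y z -> Krel n x y' z.
Proof. by K_axioms; apply: K2. Qed.

Lemma Krel_resp3 (x y z z' : 'I_n -> A) : Erel n z z' -> Krel n x y z -> Krel n x y z'.
Proof. by K_axioms; apply: K3. Qed.

Lemma Krel_rot (x y z : 'I_n -> A) : Krel n x y z -> Krel n y z x.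
Proof. by K_axioms; apply: Kcy. Qed.

Lemma Krel_asym (x y z : 'I_n -> A) : Krel n x y z -> ~ Krel n z y x.
Proof. by K_axioms; apply: Kas. Qed.

Lemma Krel_trans (x y z w : 'I_n -> A) : Krel n x y z -> Krel n x z w -> Krel n x y w.
Proof. by K_axioms; apply: Ktr. Qed.

Lemma Krel_total {x y z : 'I_n -> A} :
  injective x -> injective y -> injective z ->
  ~ Erel n x y -> ~ Erel n y z -> ~ Erel n x z -> Krel n x y z \/ Krel n z y x.
Proof. by K_axioms; apply: Kto. Qed.

Lemma Krel_Rrel (v1 v2 v3 w1 w2 w3 : 'I_n -> A) :
  Rrel n v1 w1 -> Rrel n v2 w2 -> Rrel n v3 w3 ->
  Krel n v1 v2 v3 <-> Krel n w1 w2 w3.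
Proof. by K_axioms; apply: K4b. Qed.

Lemma injective_Rrel (x y : 'I_n -> A) : Rrel n x y -> injective x /\ injective y.
Proof. by have [_ HR _ _ _] := HL Hn; apply: HR. Qed.

Lemma injective_Krel (x y z : 'I_n -> A) :
  Krel n x y z -> [/\ injective x, injective y & injective z].
Proof. by have [_ _ HKr _ _] := HL Hn; apply: HKr. Qed.

Lemma Krel_rot2 (x y z : 'I_n -> A) : Krel n x y z -> Krel n z x y.
Proof. by move=> /Krel_rot /Krel_rot. Qed.

Lemma Krel_irr (x y : 'I_n -> A) : ~ Krel n x x y.
Proof. by move=> H; apply: (Krel_asym H); apply: Krel_rot2. Qed.

Lemma Krel_nonE (x y z : 'I_n -> A) : Krel n x y z ->
  [/\ ~ Erel n x y, ~ Erel n y z & ~ Erel n x z].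
Proof.
move=> H; split=> /Erel_sym He.
- exact: Krel_irr (Krel_resp2 He H).
- exact: Krel_irr (Krel_rot (Krel_resp3 He H)).
- exact: Krel_irr (Krel_rot2 (Krel_resp3 He H)).
Qed.

Lemma Rrel_nonE (x y : 'I_n -> A) : Rrel n x y -> ~ Erel n x y.
Proof.
move=> H He; have [ix _] := injective_Rrel H.
exact: Rrel_irr (Rrel_resp (Erel_refl ix) (Erel_sym He) H).
Qed.

Lemma Krel_transr (x y z w : 'I_n -> A) :
  Krel n x y z -> Krel n x z w -> Krel n y z w.
Proof.
move=> Hxyz Hxzw; have Hxyw := Krel_trans Hxyz Hxzw.
have [_ iy iz] := injective_Krel Hxyz; have [_ _ iw] := injective_Krel Hxzw.
have [_ Eyz _] := Krel_nonE Hxyz; have [_ Ezw _] := Krel_nonE Hxzw.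
have [_ Eyw _] := Krel_nonE Hxyw.
case: (Krel_total iy iz iw Eyz Ezw Eyw) => // Hwzy.
have Hzyx : Krel n z y x by apply: (@Krel_trans z y w x); apply: Krel_rot.
by case: (Krel_asym Hxyz (Krel_rot (Krel_rot2 Hzyx))).
Qed.

Lemma Krel_of_nKrel {x y z : 'I_n -> A} :
  injective x -> injective y -> injective z ->
  ~ Erel n x y -> ~ Erel n y z -> ~ Erel n x z -> ~ Krel n x z y -> Krel n x y z.
Proof.
move=> ix iy iz Exy Eyz Exz Hxzy.
by case: (Krel_total ix iy iz Exy Eyz Exz) => // /Krel_rot /Krel_rot.
Qed.

Lemma arc_start_unique (p q p' q' y : 'I_n -> A) :
  Krel n p y q -> Krel n p' y q' -> ~ Krel n p p' q -> ~ Krel n p' p q' -> Erel n p p'.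
Proof.
move=> Hpyq Hp'yq' Np'q Npq'; apply: NNPP => Epp'.
have [ip _ iq] := injective_Krel Hpyq; have [ip' _ _] := injective_Krel Hp'yq'.
have [_ _ Epq] := Krel_nonE Hpyq.
have Hpyp' : Krel n p y p'.
  case: (classic (Erel n q p')) => Eqp'; first exact: Krel_resp3 Eqp' Hpyq.
  exact: Krel_trans Hpyq (Krel_of_nKrel ip iq ip' Epq Eqp' Epp' Np'q).
exact: Npq' (Krel_trans (Krel_rot2 Hpyp') Hp'yq').
Qed.

Section CyclicSequence.

Variables (l : nat) (g : nat -> 'I_n -> A).
Hypotheses (Hl : 0 < l) (HgR : forall j, Rrel n (g j) (g j.+1))
  (Hgm : forall j, g j = g (j %% l)).

Definition empty_arc p q := forall j, ~ Krel n (g p) (g j) (g q).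

Lemma injective_g j : injective (g j).
Proof. by have [] := injective_Rrel (HgR j). Qed.
Arguments injective_g : clear implicits.

Lemma g_eq_succ j : g j = g (j + l.-1).+1.
Proof. by rewrite Hgm [RHS]Hgm -addnS prednK // modnDr. Qed.

Lemma exists_empty_arc (x : 'I_n -> A) : injective x -> (forall j, ~ Erel n x (g j)) ->
  exists p q, Krel n (g p) x (g q) /\ empty_arc p q.
Proof.
move=> ix HxE.
have [q _ Hq] := @exists_minimal _ (fun u v => Krel n x u v) g l
  (fun u H => Krel_irr (Krel_rot H)) (fun u v w => @Krel_trans x u v w) Hl.
have [p _ Hp] := @exists_minimal _ (fun u v => Krel n x v u) g l
  (fun u H => Krel_irr (Krel_rot H)) (fun u v w Huv Hvw => Krel_trans Hvw Huv) Hl.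
(* g q is the first point of the cycle after x, and g p the last one before x. *)
have {}Hq j : ~ Krel n x (g j) (g q) by rewrite [g j]Hgm; apply: Hq; rewrite ltn_mod.
have {}Hp j : ~ Krel n x (g p) (g j) by rewrite [g j]Hgm; apply: Hp; rewrite ltn_mod.
have Hxqq1 : Krel n x (g q) (g q.+1).
  exact: Krel_of_nKrel ix (injective_g q) (injective_g q.+1)
    (HxE q) (Rrel_nonE (HgR q)) (HxE q.+1) (Hq q.+1).
have Epq : ~ Erel n (g q) (g p).
  by move=> Eqp; apply: (Hp q.+1); apply: Krel_resp2 Eqp Hxqq1.
have Hxqp : Krel n x (g q) (g p).
  exact: Krel_of_nKrel ix (injective_g q) (injective_g p) (HxE q) Epq (HxE p) (Hp q).
exists p, q; split; first exact: Krel_rot2 Hxqp.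
move=> j Hpjq; have [Epj Ejq _] := Krel_nonE Hpjq.
have Hxqj : Krel n x (g q) (g j).
  exact: Krel_of_nKrel ix (injective_g q) (injective_g j)
    (HxE q) (fun E => Ejq (Erel_sym E)) (HxE j) (Hq j).
have Hxjp : Krel n x (g j) (g p).
  exact: Krel_of_nKrel ix (injective_g j) (injective_g p)
    (HxE j) (fun E => Epj (Erel_sym E)) (HxE p) (Hp j).
exact: Krel_asym Hpjq (Krel_transr Hxqj Hxjp).
Qed.

Lemma Krel_succ_in_arc p q (x y x1 : 'I_n -> A) : empty_arc p q ->
  (forall j, ~ Erel n x (g j)) -> Rrel n x x1 ->
  Krel n (g p) x y -> Krel n (g p) y (g q) -> Krel n x y x1.
Proof.
move=> Hpq HxE Hxx1 Hpxy Hpyq.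
have [_ ix1] := injective_Rrel Hxx1.
have Hp1x1q1 : Krel n (g p.+1) x1 (g q.+1).
  exact/(Krel_Rrel (HgR p) Hxx1 (HgR q))/(Krel_trans Hpxy Hpyq).
have Hp1q1 : empty_arc p.+1 q.+1.
  by move=> j; rewrite [g j]g_eq_succ => /(Krel_Rrel (HgR p) (HgR _) (HgR q)); apply: Hpq.
have Hx1E j : ~ Erel n x1 (g j).
  rewrite [g j]g_eq_succ => /Erel_sym Ex1.
  have Hjx1 := Rrel_resp (Erel_refl (injective_g _)) Ex1 (HgR (j + l.-1)).
  exact: HxE (j + l.-1) (Rrel_injl Hxx1 Hjx1).
(* x1 is in the empty arc (g p.+1, g q.+1), which starts elsewhere, so it is
   not in (g p, g q). *)
have Hpqx1 : Krel n (g p) (g q) x1.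
  have [_ _ Epq] := Krel_nonE (Krel_trans Hpxy Hpyq).
  apply: Krel_of_nKrel (injective_g p) (injective_g q) ix1 Epq
    (fun E => Hx1E q (Erel_sym E)) (fun E => Hx1E p (Erel_sym E)) _ => Hpx1q.
  apply: Rrel_nonE (HgR p) (arc_start_unique Hpx1q Hp1x1q1 (Hpq p.+1) _).
  by rewrite [g p]g_eq_succ; apply: Hp1q1.
exact: Krel_transr Hpxy (Krel_trans Hpyq Hpqx1).
Qed.

Lemma le_lt_of_same_cycle_position (a0 a1 b0 b1 : 'I_n -> A) :
  Rrel n a0 a1 -> Rrel n b0 b1 ->
  (forall j, Erel n a0 (g j) <-> Erel n b0 (g j)) ->
  (forall p q, Krel n (g p) a0 (g q) <-> Krel n (g p) b0 (g q)) ->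
  le_lt a0 b0 a1 \/ le_lt b0 a0 b1.
Proof.
move=> Ha Hb HtE HtK; have [ia0 _] := injective_Rrel Ha; have [ib0 _] := injective_Rrel Hb.
case: (classic (Erel n a0 b0)) => Eab.
  by left; right; split=> // Eba1; apply: Rrel_nonE Ha (Erel_trans Eab Eba1).
have HaE j : ~ Erel n a0 (g j).
  by move=> Eaj; apply: Eab (Erel_trans Eaj (Erel_sym (proj1 (HtE j) Eaj))).
have HbE j : ~ Erel n b0 (g j) by move=> /HtE; apply: HaE.
have [p [q [Hpaq Hpq]]] := exists_empty_arc ia0 HaE.
have Hpbq : Krel n (g p) b0 (g q) by apply/HtK.
case: (Krel_total (injective_g p) ia0 ib0 (fun E => HaE p (Erel_sym E)) Eab
  (fun E => HbE p (Erel_sym E))) => [Hpab | /Krel_rot2 Hpba].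
- by left; left; apply: Krel_succ_in_arc Hpq HaE Ha Hpab Hpbq.
- by right; left; apply: Krel_succ_in_arc Hpq HbE Hb Hpba Hpaq.
Qed.

End CyclicSequence.

End CircularOrder.

Definition FAnds (ps : seq form) : form := foldr FAnd (FEq 0 0) ps.

Lemma sat_FAnds (M : Lstr) (D : M -> Prop) rho (F : nat -> form) (js : seq nat) :
  sat D rho (FAnds [seq F j | j <- js]) <-> forall j, j \in js -> sat D rho (F j).
Proof.
elim: js => [|j js IH] /=; first by [].
split=> [[Hj /IH Hjs] i | H].
  by rewrite inE => /orP [/eqP -> // | /Hjs].
by split; [apply: H; rewrite inE eqxx | apply/IH => i Hi; apply: H; rewrite inE Hi orbT].
Qed.

Lemma sat_FExs (M : Lstr) (D : M -> Prop) rho phi (vs : seq nat) :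
  sat D rho (foldr FEx phi vs) <-> exists rho', [/\ sat D rho' phi,
    forall v, v \in vs -> D (rho' v) & forall v, v \notin vs -> rho' v = rho v].
Proof.
elim: vs rho => [|v vs IH] rho /=.
  split=> [H | [rho' [H _ Hout]]]; first by exists rho.
  by have -> : rho = rho' by apply: functional_extensionality => w; rewrite Hout.
split=> [[x [Dx /IH [rho' [H HD Hout]]]] | [rho' [H HD Hout]]].
  exists rho'; split=> // w; last first.
    by rewrite inE negb_or => /andP [/negbTE Hwv Hw]; rewrite Hout // /upd Hwv.
  rewrite inE => /orP [/eqP -> | /HD //].
  by case: (boolP (v \in vs)) => [/HD // | Hv]; rewrite Hout // /upd eqxx.
exists (rho' v); split; first by apply: HD; rewrite inE eqxx.
apply/IH; exists rho'; split=> // [w Hw | w Hw]; first by apply: HD; rewrite inE Hw orbT.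
by rewrite /upd; case: eqP => [-> | /eqP Hwv]; last by apply: Hout; rewrite inE negb_or Hwv.
Qed.

Definition block_vars n j : 'I_n.+3 -> nat := fun i => j * n.+3 + i.
Arguments block_vars : clear implicits.

Definition blocks_env (T : Type) n (g : nat -> 'I_n.+3 -> T) : nat -> T :=
  fun v => g (v %/ n.+3) (inord (v %% n.+3)).

Lemma blocks_env_vars (T : Type) n (g : nat -> 'I_n.+3 -> T) j :
  blocks_env g \o block_vars n j = g j.
Proof.
apply: functional_extensionality => i /=; rewrite /blocks_env /block_vars.
by rewrite divnMDl // divn_small // addn0 modnMDl modn_small // inord_val.
Qed.

Lemma block_vars_lt n r j i : j < r -> block_vars n j i < r * n.+3.
Proof.
move=> lt_j; rewrite /block_vars; apply: leq_trans (_ : j.+1 * n.+3 <= _).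
  by rewrite mulSn [n.+3 + _]addnC ltn_add2l.
by rewrite leq_mul2r lt_j orbT.
Qed.

Definition Rcycle_form n : form :=
  foldr FEx (FAnds [seq @FR n (block_vars n j) (block_vars n (j.+1 %% n.+3)) | j <- iota 0 n.+3])
    (iota 0 (n.+3 * n.+3)).

Definition has_Rcycle (M : Lstr) (D : M -> Prop) n : Prop :=
  exists g : nat -> 'I_n.+3 -> M, (forall j i, j < n.+3 -> D (g j i)) /\
    forall j, j < n.+3 -> Rrel n.+3 (g j) (g (j.+1 %% n.+3)).

Lemma sat_Rcycle_form (M : Lstr) (D : M -> Prop) rho n :
  sat D rho (Rcycle_form n) <-> has_Rcycle D n.
Proof.
rewrite /Rcycle_form sat_FExs; split=> [[rho' [Hcyc HD _]] | [g [HgD HgR]]].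
  exists (fun j => rho' \o block_vars n j); split.
    by move=> j i lt_j; apply: HD; rewrite mem_iota; apply: block_vars_lt.
  by move=> j lt_j; move/sat_FAnds: Hcyc; apply; rewrite mem_iota.
pose rho' v := if v < n.+3 * n.+3 then blocks_env g v else rho v.
have Erho' j : j < n.+3 -> rho' \o block_vars n j = g j.
  move=> lt_j; rewrite -(blocks_env_vars g j); apply: functional_extensionality => i.
  by rewrite /= /rho' (block_vars_lt _ lt_j).
exists rho'; split.
- by apply/sat_FAnds => j; rewrite mem_iota /= => lt_j; rewrite !Erho' ?ltn_mod //; apply: HgR.
- by move=> v; rewrite mem_iota /= /rho' => lt_v; rewrite lt_v; apply: HgD; rewrite ltn_divLR.
- by move=> v; rewrite mem_iota /= /rho' => /negbTE ->.
Qed.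

Lemma elem_sub_has_Rcycle (M : Lstr) (N : M -> Prop) n :
  elem_sub N -> has_Rcycle (fun _ : M => True) n -> has_Rcycle N n.
Proof.
case=> [[x0 Nx0] HN]; rewrite -!(sat_Rcycle_form _ (fun _ => x0)).
exact: (HN _ _ (fun _ => Nx0)).2.
Qed.

Lemma ext_lo (T : Type) k (a : 'I_k -> T) rho (i : 'I_k) : ext a rho i = a i.
Proof. by rewrite /ext (insubT (fun x => x < k) (ltn_ord i)) /=; congr a; apply: val_inj. Qed.

Lemma ext_hi (T : Type) k (a : 'I_k -> T) rho v : ext a rho (k + v) = rho v.
Proof. by rewrite /ext insubN /= ?addKn // -ltnNge leq_addr. Qed.

Lemma same_type_over_blocks (M : Lstr) (N : M -> Prop) k (a b : 'I_k -> M) n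
    (s : 'I_n.+3 -> 'I_k) (g : nat -> 'I_n.+3 -> M) :
  same_type_over N a b -> (forall j i, N (g j i)) ->
  (forall j, Erel n.+3 (a \o s) (g j) <-> Erel n.+3 (b \o s) (g j)) /\
  (forall p q, Krel n.+3 (g p) (a \o s) (g q) <-> Krel n.+3 (g p) (b \o s) (g q)).
Proof.
move=> Hab HgN; have envN v : N (blocks_env g v) by apply: HgN.
pose sv i : nat := s i; pose gv j i := k + block_vars n j i.
have ext_s (c : 'I_k -> M) : ext c (blocks_env g) \o sv = c \o s.
  by apply: functional_extensionality => i; apply: ext_lo.
have ext_g (c : 'I_k -> M) j : ext c (blocks_env g) \o gv j = g j.
  rewrite -(blocks_env_vars g j); apply: functional_extensionality => i.
  exact: ext_hi.
split=> [j | p q].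
- by have := Hab (@FE n sv (gv j)) _ envN; rewrite /msat /= !ext_s !ext_g.
- by have := Hab (@FK n (gv p) sv (gv q)) _ envN; rewrite /msat /= !ext_s !ext_g.
Qed.

Lemma has_Rcycle_of_in_Rcycle (A : Lstr) n (x : 'I_n.+3 -> A) :
  in_Rcycle x -> has_Rcycle (fun _ : A => True) n.
Proof.
case=> c [_ _ HcR HcR_last]; exists c; split=> // j lt_j.
case: (ltnP j.+1 n.+3) => [lt_j1 | ge_j1]; first by rewrite modn_small //; apply: HcR.
have -> : j = n.+2 by apply/eqP; rewrite eqn_leq -ltnS lt_j.
by rewrite modnn.
Qed.

Definition sub_tuple (M : Lstr) (P : M -> Prop) m (t : 'I_m -> M) (Ht : forall i, P (t i)) :
  'I_m -> sub P := fun i => exist P (t i) (Ht i).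

Lemma sub_tuple_eq (M : Lstr) (P : M -> Prop) m (t1 t2 : 'I_m -> M) Ht1 Ht2 :
  t1 = t2 -> @sub_tuple M P m t1 Ht1 = @sub_tuple M P m t2 Ht2.
Proof. by move=> E; subst; rewrite (proof_irrelevance _ Ht1 Ht2). Qed.

Definition strong_chain (M : Lstr) (Ach : nat -> M -> Prop) : Prop :=
  [/\ forall k, in_C (sub (Ach k)), forall k x, Ach k x -> Ach k.+1 x
    & forall x, exists k, Ach k x].

Section StrongChain.

Variables (M : Lstr) (Ach : nat -> M -> Prop).
Hypothesis HA : strong_chain Ach.

Lemma chain_mono k k' x : k <= k' -> Ach k x -> Ach k' x.
Proof.
have [_ HAS _] := HA; elim: k' => [|k' IH]; first by rewrite leqn0 => /eqP ->.
by rewrite leq_eqVlt => /orP [/eqP -> // | /IH H /H /HAS].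
Qed.

Lemma chain_cover (e : nat -> M) r : exists k, forall j, j < r -> Ach k (e j).
Proof.
have [_ _ HAc] := HA; elim: r => [|r [k IH]]; first by exists 0.
have [k' Hk'] := HAc (e r); exists (maxn k k') => j.
rewrite ltnS leq_eqVlt => /orP [/eqP -> | /IH].
- exact: chain_mono (leq_maxr k k') Hk'.
- exact: chain_mono (leq_maxl k k').
Qed.

Lemma chain_cover_blocks n (g : nat -> 'I_n.+3 -> M) r :
  exists k, forall j, j < r -> forall i, Ach k (g j i).
Proof.
have [k Hk] := chain_cover (blocks_env g) (r * n.+3).
exists k => j lt_j i; rewrite -(blocks_env_vars g j) /=.
exact/Hk/block_vars_lt.
Qed.

Lemma chain_has_Rcycle n (t u : 'I_n.+3 -> M) : Rrel n.+3 t u -> has_Rcycle (fun _ : M => True) n.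
Proof.
move=> Htu; have [k Hk] := chain_cover_blocks (fun j => if j == 0 then t else u) 2.
have [HAC _ _] := HA; have [[_ [HL HK]] Hstrong] := HAC k.
have Rk : Rrel n.+3 (sub_tuple (Hk 0 isT)) (sub_tuple (Hk 1 isT)) := Htu.
have n3 : 2 < n.+3 by [].
have [it iu] := injective_Rrel HL n3 Rk.
case: (Hstrong _ n3) => [HallE | /(_ _ it) /has_Rcycle_of_in_Rcycle [g [_ HgR]]].
  by case: (Rrel_nonE (HK _ n3) HL n3 Rk (HallE _ _ it iu)).
by exists (fun j i => proj1_sig (g j i)); split=> // j /HgR.
Qed.

Lemma chain_le_lt n l (g : nat -> 'I_n.+3 -> M) (a0 a1 b0 b1 : 'I_n.+3 -> M) :
  0 < l -> (forall j, Rrel n.+3 (g j) (g j.+1)) -> (forall j, g j = g (j %% l)) ->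
  Rrel n.+3 a0 a1 -> Rrel n.+3 b0 b1 ->
  (forall j, Erel n.+3 a0 (g j) <-> Erel n.+3 b0 (g j)) ->
  (forall p q, Krel n.+3 (g p) a0 (g q) <-> Krel n.+3 (g p) b0 (g q)) ->
  le_lt a0 b0 a1 \/ le_lt b0 a0 b1.
Proof.
move=> Hl HgR Hgm Ha Hb HtE HtK.
pose T j := match j with 0 => a0 | 1 => a1 | 2 => b0 | 3 => b1 | j'.+4 => g j' end.
have [k Hk] := chain_cover_blocks T (l + 4).
have HTk j : j < 4 -> forall i, Ach k (T j i).
  by move=> lt_j; apply: Hk; apply: leq_trans lt_j (leq_addl l 4).
have Hgk j i : Ach k (g j i).
  by rewrite Hgm; apply: (Hk (j %% l).+4); rewrite addn4 !ltnS ltn_mod.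
have [HAC _ _] := HA; have [[_ [HL HK]] _] := HAC k.
have n3 : 2 < n.+3 by [].
have HGm j : sub_tuple (Hgk j) = sub_tuple (Hgk (j %% l)) by apply: sub_tuple_eq.
(* The relations of [sub P] are those of M on the projections, so the
   hypotheses apply verbatim to the lifted tuples. *)
exact: (le_lt_of_same_cycle_position (HK _ n3) HL n3 Hl (g := fun j => sub_tuple (Hgk j))
  HgR HGm (a0 := sub_tuple (HTk 0 isT)) (a1 := sub_tuple (HTk 1 isT))
  (b0 := sub_tuple (HTk 2 isT)) (b1 := sub_tuple (HTk 3 isT)) Ha Hb HtE HtK).
Qed.

End StrongChain.

Lemma has_Rcycle_periodic (M : Lstr) (D : M -> Prop) n : has_Rcycle D n ->
  exists g : nat -> 'I_n.+3 -> M, [/\ forall j i, D (g j i),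
    forall j, Rrel n.+3 (g j) (g j.+1) & forall j, g j = g (j %% n.+3)].
Proof.
case=> c [HcD HcR]; exists (fun j => c (j %% n.+3)); split=> [j i | j | j].
- by apply: HcD; rewrite ltn_mod.
- by rewrite -[j.+1]addn1 -modnDml addn1; apply: HcR; rewrite ltn_mod.
- by rewrite modn_mod.
Qed.

Theorem lemma2p3 (M : Lstr) (HM : generic M)
  (k : nat) (a b : 'I_k -> M)
  (Ha : injective a) (Hb : injective b)
  (HaC : in_C (sub (range_of a))) (HbC : in_C (sub (range_of b)))
  (Hab0 : same_type0 a b)
  (N : M -> Prop) (HN : elem_sub N) (HabN : same_type_over N a b)
  (l : nat) (Hl : 2 < l) (s : 'I_l -> 'I_k)
  (Hs : forall i j : 'I_l, i < j -> s i < s j)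
  (fa fb : 'I_l -> M)
  (Hfa : Rrel l (a \o s) fa) (Hfb : Rrel l (b \o s) fb) :
  le_lt (a \o s) (b \o s) fa \/ le_lt (b \o s) (a \o s) fb.
Proof.
case: l Hl s Hs fa fb Hfa Hfb => [|[|[|n]]] // _ s _ fa fb Hfa Hfb.
have [_ [[Ach HA] _]] := HM.
have [g [HgN HgR Hgm]] :=
  has_Rcycle_periodic (elem_sub_has_Rcycle HN (chain_has_Rcycle HA Hfa)).
have [HtE HtK] := same_type_over_blocks s HabN HgN.
exact: (chain_le_lt HA (ltn0Sn _) HgR Hgm Hfa Hfb HtE HtK).
Qed.
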